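(* REFORM with the RPTSC reward scheme with at most $k=2$ pairings satisfies qualitative fairness: for any two agents $a_i,a_j$ with identical beliefs who submit the same report $y\in\mathcal{X}$ at the same time $t$, with TERM scores $\Omega_i\ge\Omega_j$, their expected rewards satisfy $\mathbb{E}[R_i(y,t)\mid\Omega_i]\ge\mathbb{E}[R_j(y,t)\mid\Omega_j]$.
   Context: Setting. $n\ge2$ tasks per round with common finite answer space $\mathcal{X}$; rewards are scaled by $\alpha>0$ and a decay factor $\beta(t)>0$. Each agent has a reputation (TERM) score $\Omega$. REFORM with RPTSC reward (at most two pairings): sample $n-1$ reports, one from each other task, and let $f(y)$ be the fraction equal to $y$; choose a random peer on the same task with report $y_p$ and score $\Omega_p$: if $y=y_p$ the reward is $\alpha\beta(t)(1/f(y)-1)$; otherwise, if the agent's score is $\le\Omega_p$ or two pairings have been used, the reward is $-\alpha\beta(t)$ (or $0$ if $f(y)=0$); otherwise a second peer is drawn. Beliefs (common to both agents): $q_y\in(0,1)$, the probability that a peer reports $y$; $q'_y\in(0,1)$, the probability that a peer on the same task reports $y$ given the agent's information; and peers' TERM scores follow a common distribution, so that an agent with score $\Omega$ believes a random peer has score below $\Omega$ with probability $T(\Omega)=\Pr(\Omega_p<\Omega)$, the same for every peer. The expected reward of an agent with score $\Omega$ reporting $y$ at time $t$ is $$\mathbb{E}[R(y,t)\mid\Omega]=\alpha\beta(t)\left[\frac{q'_y}{q_y}-1+T(\Omega)(1-q'_y)\frac{q'_y}{q_y}\right]\left[1-(1-q_y)^{n-1}\right].$$ *)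

From HB Require Import structures.
From mathcomp Require Import all_boot all_order all_algebra.
From mathcomp Require Import all_classical all_reals all_analysis.
Set Implicit Arguments. Unset Strict Implicit. Unset Printing Implicit Defensive.
Import Order.TTheory GRing.Theory Num.Theory.
Local Open Scope classical_set_scope.
Local Open Scope ring_scope.

(* T(Omega) = Pr(Omega_p < Omega), where the peer TERM score Omega_p follows the
   common distribution P (a Borel probability measure on the reals). *)
Definition T_below (R : realType) (P : probability R R) (Omega : R) : R :=
  fine (P [set` `]-oo, Omega[]).

Definition expected_reward (R : realType) (X : finType)
    (alpha : R) (beta : R -> R) (n : nat) (q q' : X -> R)
    (P : probability R R) (y : X) (t : R) (Omega : R) : R :=
  alpha * beta t
  * (q' y / q y - 1 + T_below P Omega * (1 - q' y) * (q' y / q y))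
  * (1 - (1 - q y) ^+ (n - 1)).

From HB Require Import structures.
From mathcomp Require Import all_boot all_order all_algebra.
From mathcomp Require Import all_classical all_reals all_analysis.
Set Implicit Arguments. Unset Strict Implicit. Unset Printing Implicit Defensive.
Import Order.TTheory GRing.Theory Num.Theory.
Local Open Scope classical_set_scope.
Local Open Scope ring_scope.

(* The expected reward is affine in T(Omega) with slope
   alpha beta(t) (1 - q'_y) (q'_y / q_y) [1 - (1 - q_y)^(n-1)] >= 0,
   and T is a distribution function, hence nondecreasing in Omega. *)

Lemma le_T_below (R : realType) (P : probability R R) (a b : R) :
  a <= b -> T_below P a <= T_below P b.
Proof.
move=> le_ab; rewrite /T_below.
have fin_itv (c : R) : P [set` `]-oo, c[] \is a fin_num.
  rewrite ge0_fin_numE ?measure_ge0 //.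
  exact: le_lt_trans (probability_le1 P (measurable_itv _)) (ltry 1).
apply: fine_le; rewrite ?fin_itv //.
apply: le_measure; rewrite ?inE; try exact: measurable_itv.
by move=> x /=; rewrite !in_itv /= => /lt_le_trans; apply.
Qed.

Lemma one_subX_ge0 (R : numDomainType) (p : R) (m : nat) :
  0 <= p <= 1 -> 0 <= 1 - (1 - p) ^+ m.
Proof.
case/andP=> p_ge0 p_le1.
by rewrite subr_ge0 exprn_ile1 // ?subr_ge0 // gerBl.
Qed.

Lemma ler_gain_bonus (R : numDomainType) (r p u v : R) :
  0 <= r -> p <= 1 -> u <= v ->
  r - 1 + u * (1 - p) * r <= r - 1 + v * (1 - p) * r.
Proof.
move=> r_ge0 p_le1 le_uv; rewrite lerD2l.
by apply: ler_wpM2r => //; apply: ler_wpM2r => //; rewrite subr_ge0.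
Qed.

Theorem theorem2 (R : realType) (X : finType) (n : nat) (alpha : R)
    (beta : R -> R) (q q' : X -> R) (P : probability R R)
    (y : X) (t : R) (Omega_i Omega_j : R) :
  (2 <= n)%N -> 0 < alpha -> (forall s, 0 < beta s) ->
  (forall x, 0 < q x < 1) -> (forall x, 0 < q' x < 1) ->
  Omega_j <= Omega_i ->
  expected_reward alpha beta n q q' P y t Omega_j
    <= expected_reward alpha beta n q q' P y t Omega_i.
Proof.
move=> _ alpha_gt0 beta_gt0 q_range q'_range le_Omega.
have /andP[qy_gt0 qy_lt1] := q_range y.
have /andP[q'y_gt0 q'y_lt1] := q'_range y.
rewrite /expected_reward.
apply: ler_wpM2r; first by rewrite one_subX_ge0 ?ltW.
apply: ler_wpM2l; first by rewrite mulr_ge0 ?ltW.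
apply: ler_gain_bonus (ltW q'y_lt1) (le_T_below P le_Omega).
by rewrite divr_ge0 ?ltW.
Qed.
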